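(* Let $\mathcal{H}_A,\mathcal{H}_B,\mathcal{H}_C$ be finite-dimensional complex Hilbert spaces and let $U=\sum_{j=1}^r Q_j\otimes R_j$ be a matrix on $\mathcal{H}_A\otimes\mathcal{H}_B\otimes\mathcal{H}_C$, where $Q_1,\dots,Q_r$ are linearly independent matrices on $\mathcal{H}_A\otimes\mathcal{H}_B$ and $R_1,\dots,R_r$ are linearly independent matrices on $\mathcal{H}_C$. Suppose that $Q_1,\dots,Q_n$ ($n\le r$) are product matrices, i.e. $Q_j=X_j'\otimes Y_j'$ for some matrices $X_j'$ on $\mathcal{H}_A$ and $Y_j'$ on $\mathcal{H}_B$. Then there exists a decomposition $U=\sum_{i=1}^{\mathrm{sr}(U)}X_i\otimes Y_i\otimes Z_i$ with exactly $\mathrm{sr}(U)$ terms such that $X_j\otimes Y_j=Q_j$ for $j=1,\dots,n$.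
   Context: For a matrix $U$ on a tensor product $\mathcal{H}_1\otimes\cdots\otimes\mathcal{H}_m$ of finite-dimensional complex Hilbert spaces, its Schmidt rank $\mathrm{sr}(U)$ is the least integer $r$ such that $U=\sum_{j=1}^r A_{j,1}\otimes\cdots\otimes A_{j,m}$ with each $A_{j,i}$ a matrix on $\mathcal{H}_i$ (i.e. the tensor rank of $U$). *)

From HB Require Import structures.
From mathcomp Require Import all_boot all_order all_algebra.
From mathcomp Require Import complex mxtens.
From mathcomp Require Import reals.
Set Implicit Arguments. Unset Strict Implicit. Unset Printing Implicit Defensive.
Import GRing.Theory.
Local Open Scope ring_scope.

(* The complex numbers are modelled as R[i] for R : realType
   (any realType is a complete archimedean ordered field, i.e. the reals). *)

(* The tensor product of matrices is mathcomp-real-closed's Kronecker product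
   [tensmx] (written *t), grouped as (X *t Y) *t Z. *)
Definition has_decomp3 (K : pzRingType) (a b c : nat) (U : 'M[K]_(a * b * c)) (s : nat) :=
  exists (X : nat -> 'M[K]_a) (Y : nat -> 'M[K]_b) (Z : nat -> 'M[K]_c),
    U = \sum_(i < s) tensmx (tensmx (X i) (Y i)) (Z i).

Definition is_schmidt_rank3 (K : pzRingType) (a b c : nat) (U : 'M[K]_(a * b * c)) (s : nat) :=
  has_decomp3 U s /\ forall t, has_decomp3 U t -> (s <= t)%N.

From Stdlib Require Import Classical_Prop.
From HB Require Import structures.
From mathcomp Require Import all_boot all_order all_algebra.
From mathcomp Require Import complex mxtens.
From mathcomp Require Import reals.
Set Implicit Arguments. Unset Strict Implicit. Unset Printing Implicit Defensive.
Import GRing.Theory.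
Local Open Scope ring_scope.

(* Fix a decomposition U = sum_{i<s} P_i (x) Z_i with
   P_i = X_i (x) Y_i and s = sr(U) minimal.
   1. Contracting the C factor against the coordinate form dual to R_j
      (the map id (x) phi, [contract]) sends U to Q_j on one side and to a
      combination of the P_i on the other, so every Q_j lies in span(P_i).
   2. Complete the free family Q_1..Q_n by some of the P_i into a basis B of
      span(P_i); all members of B are products.  Re-expanding U over B gives
      a decomposition with |B| = dim span(P_i) <= s terms, hence exactly s by
      minimality, and its first n bipartite factors are Q_1..Q_n. *)

Section TensorBilinear.
Variables (F : fieldType) (m n p q : nat).

Lemma tensmxZl k (A : 'M[F]_(m, n)) (C : 'M[F]_(p, q)) : (k *: A) *t C = k *: (A *t C).
Proof. by apply/matrixP=> i j; rewrite !mxE mulrA. Qed.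

Lemma tensmxZr k (A : 'M[F]_(m, n)) (C : 'M[F]_(p, q)) : A *t (k *: C) = k *: (A *t C).
Proof. by apply/matrixP=> i j; rewrite !mxE mulrCA. Qed.

Lemma tensmx_suml (I : Type) (r : seq I) (P : pred I) (G : I -> 'M[F]_(m, n))
    (C : 'M[F]_(p, q)) :
  (\sum_(i <- r | P i) G i) *t C = \sum_(i <- r | P i) G i *t C.
Proof.
apply/matrixP=> i j; rewrite mxE !summxE mulr_suml.
by apply: eq_bigr => k _; rewrite !mxE.
Qed.

Lemma tensmx_sumr (I : Type) (r : seq I) (P : pred I) (G : I -> 'M[F]_(p, q))
    (A : 'M[F]_(m, n)) :
  A *t (\sum_(i <- r | P i) G i) = \sum_(i <- r | P i) A *t G i.
Proof.
apply/matrixP=> i j; rewrite mxE !summxE mulr_sumr.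
by apply: eq_bigr => k _; rewrite !mxE.
Qed.

Lemma delta_mx_tens (i : 'I_m) (j : 'I_n) (k : 'I_p) (l : 'I_q) :
  delta_mx (mxtens_index (i, k)) (mxtens_index (j, l)) =
  (delta_mx i j : 'M[F]_(m, n)) *t (delta_mx k l : 'M[F]_(p, q)).
Proof.
apply/matrixP=> x y; case: (mxtens_indexP x) => x1 x2; case: (mxtens_indexP y) => y1 y2.
rewrite tensmxE !mxE !(inj_eq (can_inj (@mxtens_indexK _ _))) !xpair_eqE.
by do 4!case: (_ == _); rewrite ?mulr1 ?mulr0.
Qed.

End TensorBilinear.

Lemma classical_ex_min (D : nat -> Prop) t0 : D t0 ->
  exists s, D s /\ forall t, D t -> (s <= t)%N.
Proof.
elim: t0 {-2}t0 (leqnn t0) => [|k IH] t0 le_t0 Dt0.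
  by exists t0; split=> // t _; move: le_t0; rewrite leqn0 => /eqP ->.
have [[t [lt_t Dt]]|no_smaller] := classic (exists t, (t < t0)%N /\ D t).
  by apply: (IH t) => //; rewrite -ltnS (leq_trans lt_t le_t0).
exists t0; split=> // t Dt; rewrite leqNgt; apply/negP => lt_t.
by apply: no_smaller; exists t.
Qed.

Lemma nat_prefix_choice (A : Type) (x0 : A) (P : nat -> A -> Prop) k :
  (forall i, (i < k)%N -> exists x, P i x) ->
  exists f : nat -> A, forall i, (i < k)%N -> P i (f i).
Proof.
elim: k => [|k IH] ex_P; first by exists (fun _ => x0).
have [f Pf] := IH (fun i lt_ik => ex_P i (ltnW lt_ik)).
have [x Px] := ex_P k (ltnSn k).
exists (fun i => if i == k then x else f i) => i; rewrite ltnS leq_eqVlt.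
by case: eqP => [-> //|_ /Pf].
Qed.

Section Decompositions.
Variables (F : fieldType) (a b c : nat).
Implicit Types U V : 'M[F]_(a * b * c).

Lemma has_decomp3_add U V s t :
  has_decomp3 U s -> has_decomp3 V t -> has_decomp3 (U + V) (s + t).
Proof.
move=> [X1 [Y1 [Z1 ->]]] [X2 [Y2 [Z2 ->]]].
pose glue (T : Type) (f1 f2 : nat -> T) i := if (i < s)%N then f1 i else f2 (i - s)%N.
exists (glue _ X1 X2), (glue _ Y1 Y2), (glue _ Z1 Z2).
rewrite big_split_ord /=; congr (_ + _); apply: eq_bigr => i _; rewrite /glue /=.
  by rewrite ltn_ord.
by rewrite ltnNge leq_addr /= addKn.
Qed.

(* Every tripartite matrix is a finite sum of product matrices
   (e.g. its expansion over matrix units). *)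
Lemma has_decomp3_exists U : exists t, has_decomp3 U t.
Proof.
pose D M := exists t, @has_decomp3 F a b c M t.
have D0 : D 0 by exists 0%N, (fun _ => 0), (fun _ => 0), (fun _ => 0); rewrite big_ord0.
have DD M N : D M -> D N -> D (M + N).
  by move=> [t1 h1] [t2 h2]; exists (t1 + t2)%N; apply: has_decomp3_add.
rewrite [U]matrix_sum_delta; apply: (big_ind D) => // i _; apply: (big_ind D) => // j _.
move: (U i j) => u.
case: (mxtens_indexP i) => i1 i2; case: (mxtens_indexP j) => j1 j2.
case: (mxtens_indexP i1) => i11 i12; case: (mxtens_indexP j1) => j11 j12.
exists 1%N, (fun _ => delta_mx i11 j11), (fun _ => delta_mx i12 j12),
  (fun _ => u *: delta_mx i2 j2).
by rewrite big_ord1 !delta_mx_tens tensmxZr.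
Qed.

Lemma schmidt_rank3_exists U : exists s, is_schmidt_rank3 U s.
Proof. by have [t Ut] := has_decomp3_exists U; apply: classical_ex_min Ut. Qed.

End Decompositions.

Section Contraction.
Variables (F : fieldType) (m c : nat) (phi : {scalar 'M[F]_c}).

(* Contraction of the second tensor factor against the linear form phi:
   phi is applied to every c x c block of M, i.e. contract = id (x) phi. *)
Definition contract (M : 'M[F]_(m * c)) : 'M[F]_m :=
  \matrix_(i, j) phi (\matrix_(k, l) M (mxtens_index (i, k)) (mxtens_index (j, l))).

Fact contract_is_linear : linear contract.
Proof.
move=> x M N; apply/matrixP=> i j; rewrite !mxE -linearP /=; congr (phi _).
by apply/matrixP=> k l; rewrite !mxE.
Qed.

HB.instance Definition _ :=
  GRing.isLinear.Build F 'M[F]_(m * c) 'M[F]_m _ contract contract_is_linear.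

Lemma contract_tens (A : 'M[F]_m) (B : 'M[F]_c) : contract (A *t B) = phi B *: A.
Proof.
apply/matrixP=> i j; rewrite !mxE mulrC -linearZ /=; congr (phi _).
by apply/matrixP=> k l; rewrite !mxE !mxtens_indexK.
Qed.

End Contraction.

Lemma free_extend_within (F : fieldType) (vT : vectType F) (P Qs : seq vT) :
  free Qs ->
  exists C, [/\ {subset C <= P}, free (Qs ++ C) & {subset P <= <<Qs ++ C>>%VS}].
Proof.
elim: P Qs => [|x P IH] Qs freeQs; first by exists [::]; rewrite cats0.
have [x_in|x_notin] := boolP (x \in <<Qs>>%VS).
  have [C [sub_CP freeQC sub_P]] := IH Qs freeQs.
  exists C; split=> // [y /sub_CP|y]; first by rewrite inE => ->; rewrite orbT.
  rewrite inE => /orP[/eqP ->|/sub_P //].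
  by apply: subvP x_in; apply: sub_span => z z_in; rewrite mem_cat z_in.
have freeQx : free (rcons Qs x).
  by rewrite (@perm_free _ _ _ (x :: Qs)) ?free_cons ?x_notin // perm_rcons.
have [C [sub_CP freeQC sub_P]] := IH _ freeQx.
exists (x :: C); rewrite -cat_rcons; split=> // y; rewrite !inE.
  by case/orP=> [/eqP ->|/sub_CP ->]; rewrite ?eqxx ?orbT.
case/orP=> [/eqP ->|/sub_P //].
by apply: memv_span; rewrite mem_cat mem_rcons inE eqxx.
Qed.

Section LeftFactors.
Variables (F : fieldType) (m c : nat).

(* If U = sum_j Q_j (x) R_j with the R_j linearly independent, every Q_j lies
   in the span of the left factors of any other expansion of U: contract
   against the coordinate form dual to R_j. *)
Lemma left_factor_in_span r t (Q P : nat -> 'M[F]_m) (R Z : nat -> 'M[F]_c) :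
  free (mkseq R r) ->
  \sum_(j < r) Q j *t R j = \sum_(i < t) P i *t Z i ->
  forall j, (j < r)%N -> Q j \in <<mkseq P t>>%VS.
Proof.
move=> freeR eqU j lt_jr.
have szR : size (mkseq R r) == r by rewrite size_mkseq.
pose phi := coord (Tuple szR) (Ordinal lt_jr).
have contractQR (k : 'I_r) : contract phi (Q k *t R k) = (k == Ordinal lt_jr)%:R *: Q k.
  rewrite contract_tens; congr (_ *: _).
  have -> : R k = (Tuple szR)`_k by rewrite /= nth_mkseq.
  exact: coord_free.
have <- : contract phi (\sum_(i < t) P i *t Z i) = Q j.
  rewrite -eqU linear_sum /= (bigD1 (Ordinal lt_jr)) // contractQR eqxx scale1r.
  rewrite big1 => [|k /negPf ne_kj]; first exact: addr0.
  by rewrite contractQR ne_kj scale0r.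
rewrite linear_sum /=.
apply: memv_suml => i _; rewrite contract_tens memvZ //.
by apply/memv_span/map_f; rewrite mem_iota ltn_ord.
Qed.

Lemma tens_sum_rebase t (P : nat -> 'M[F]_m) (Z : nat -> 'M[F]_c) (B : seq 'M[F]_m) :
  (forall i, (i < t)%N -> P i \in <<B>>%VS) ->
  exists Z' : nat -> 'M[F]_c,
    \sum_(i < t) P i *t Z i = \sum_(k < size B) B`_k *t Z' k.
Proof.
move=> P_in; pose Bt := in_tuple B.
pose Z'o (k : 'I_(size B)) := \sum_(i < t) coord Bt k (P i) *: Z i.
exists (fun k => if insub k is Some o then Z'o o else 0).
have -> : \sum_(i < t) P i *t Z i =
    \sum_(i < t) \sum_(k < size B) B`_k *t (coord Bt k (P i) *: Z i).
  apply: eq_bigr => i _; rewrite {1}(@coord_span _ _ _ Bt _ (P_in i (ltn_ord i))) tensmx_suml.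
  by apply: eq_bigr => k _; rewrite tensmxZl tensmxZr.
by rewrite exchange_big; apply: eq_bigr => k _; rewrite valK tensmx_sumr.
Qed.

End LeftFactors.

Section ProductExpansions.
Variables (F : fieldType) (a b c : nat).

Definition product_mx (M : 'M[F]_(a * b)) : Prop :=
  exists (X : 'M[F]_a) (Y : 'M[F]_b), M = X *t Y.

Lemma has_decomp3_of_products (U : 'M[F]_(a * b * c)) (B : seq 'M[F]_(a * b))
    (Z : nat -> 'M[F]_c) :
  {in B, forall M, product_mx M} ->
  U = \sum_(k < size B) B`_k *t Z k ->
  exists (X : nat -> 'M[F]_a) (Y : nat -> 'M[F]_b),
    U = \sum_(k < size B) (X k *t Y k) *t Z k /\
    forall k, (k < size B)%N -> X k *t Y k = B`_k.
Proof.
move=> prodB defU.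
have [XY XYB] : exists XY : nat -> 'M[F]_a * 'M[F]_b,
    forall k, (k < size B)%N -> B`_k = (XY k).1 *t (XY k).2.
  apply: (nat_prefix_choice (0, 0) (P := fun k XY => B`_k = XY.1 *t XY.2)) => k lt_kB.
  by have [X [Y ->]] := prodB _ (mem_nth 0 lt_kB); exists (X, Y).
exists (fun k => (XY k).1), (fun k => (XY k).2); split=> [|k /XYB -> //].
by rewrite defU; apply: eq_bigr => k _; rewrite XYB.
Qed.

Lemma minimal_decomp3_with_prefix (U : 'M[F]_(a * b * c)) s
    (X : nat -> 'M[F]_a) (Y : nat -> 'M[F]_b) (Z : nat -> 'M[F]_c)
    (Qs : seq 'M[F]_(a * b)) :
  is_schmidt_rank3 U s -> U = \sum_(i < s) (X i *t Y i) *t Z i ->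
  free Qs -> {in Qs, forall M, product_mx M} ->
  {subset Qs <= <<mkseq (fun i => X i *t Y i) s>>%VS} ->
  exists (X' : nat -> 'M[F]_a) (Y' : nat -> 'M[F]_b) (Z' : nat -> 'M[F]_c),
    [/\ U = \sum_(i < s) (X' i *t Y' i) *t Z' i,
        (size Qs <= s)%N &
        forall j, (j < size Qs)%N -> X' j *t Y' j = Qs`_j].
Proof.
move=> [_ minimal] defU freeQs prodQs Qs_in.
pose Ps := mkseq (fun i => X i *t Y i) s.
have [C [sub_CPs freeB Ps_in]] := free_extend_within Ps freeQs.
pose B := Qs ++ C.
have [Z' defUB] : exists Z' : nat -> 'M[F]_c, U = \sum_(k < size B) B`_k *t Z' k.
  rewrite defU; apply: (tens_sum_rebase (P := fun i => X i *t Y i)) => i lt_is.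
  by apply/Ps_in/map_f; rewrite mem_iota.
have prodB : {in B, forall M, product_mx M}.
  move=> M; rewrite mem_cat => /orP[/prodQs // | /sub_CPs/mapP[i _ ->]].
  by exists (X i), (Y i).
have [X' [Y' [defU' XY'B]]] := has_decomp3_of_products prodB defUB.
(* B is a basis of span Ps, so it has at most s elements. *)
have size_B : size B = s.
  apply/eqP; rewrite eqn_leq minimal ?andbT; last by exists X', Y', Z'.
  rewrite -(eqP freeB) -[s](size_mkseq (fun i => X i *t Y i)).
  apply: leq_trans (dim_span Ps); apply/dimvS/span_subvP => M.
  by rewrite mem_cat => /orP[/Qs_in // | /sub_CPs/memv_span].
have le_Qs_s : (size Qs <= s)%N by rewrite -size_B size_cat leq_addr.
exists X', Y', Z'; split=> //; first by rewrite -size_B.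
move=> j lt_jQs; rewrite XY'B ?size_B ?(leq_trans lt_jQs) //.
by rewrite nth_cat lt_jQs.
Qed.

End ProductExpansions.

Theorem minimal_decomp3_with_products (F : fieldType) (a b c r n : nat)
    (Q : nat -> 'M[F]_(a * b)) (Rm : nat -> 'M[F]_c) (U : 'M[F]_(a * b * c)) :
  U = \sum_(j < r) Q j *t Rm j ->
  free (mkseq Q r) -> free (mkseq Rm r) -> (n <= r)%N ->
  (forall j, (j < n)%N -> product_mx (Q j)) ->
  exists (s : nat) (X : nat -> 'M[F]_a) (Y : nat -> 'M[F]_b) (Z : nat -> 'M[F]_c),
    [/\ is_schmidt_rank3 U s,
        U = \sum_(i < s) (X i *t Y i) *t Z i,
        (n <= s)%N &
        forall j, (j < n)%N -> X j *t Y j = Q j].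
Proof.
move=> defU freeQ freeR le_nr prodQ.
have [s rankU] := schmidt_rank3_exists U.
have [[X [Y [Z defUs]]] _] := rankU.
have freeQs : free (mkseq Q n).
  by move: freeQ; rewrite -(subnKC le_nr) /mkseq iotaD map_cat; apply: catl_free.
have prodQs : {in mkseq Q n, forall M, product_mx M}.
  by move=> M /mapP[j]; rewrite mem_iota => /andP[_ /prodQ] ? ->.
have Qs_in : {subset mkseq Q n <= <<mkseq (fun i => X i *t Y i) s>>%VS}.
  move=> M /mapP[j]; rewrite mem_iota => /andP[_ lt_jn] ->.
  apply: (left_factor_in_span (Z := Z) freeR _ (leq_trans lt_jn le_nr)).
  by rewrite -defU defUs.
have [X' [Y' [Z' []]]] := minimal_decomp3_with_prefix rankU defUs freeQs prodQs Qs_in.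
rewrite size_mkseq => defU' le_ns XY'Q.
exists s, X', Y', Z'; split=> // j lt_jn.
by rewrite XY'Q ?size_mkseq // nth_mkseq.
Qed.

Theorem corollary2 (R : realType) (a b c r n : nat)
    (Q : nat -> 'M[R[i]]_(a * b)) (Rm : nat -> 'M[R[i]]_c)
    (U : 'M[R[i]]_(a * b * c)) :
  U = \sum_(j < r) tensmx (Q j) (Rm j) ->
  free (mkseq Q r) ->
  free (mkseq Rm r) ->
  (n <= r)%N ->
  (forall j, (j < n)%N ->
     exists (X' : 'M[R[i]]_a) (Y' : 'M[R[i]]_b), Q j = tensmx X' Y') ->
  exists (s : nat) (X : nat -> 'M[R[i]]_a) (Y : nat -> 'M[R[i]]_b)
         (Z : nat -> 'M[R[i]]_c),
    [/\ is_schmidt_rank3 U s,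
        U = \sum_(i < s) tensmx (tensmx (X i) (Y i)) (Z i),
        (n <= s)%N &
        forall j, (j < n)%N -> tensmx (X j) (Y j) = Q j].
Proof. exact: minimal_decomp3_with_products. Qed.
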